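(* Let $G_S(z)=\frac{N_S(z)}{D_S(z)}$ and $G_T(z)=\frac{N_T(z)}{D_T(z)}$ be rational transfer functions (in the forward shift operator $z$) of two discrete-time, single-input single-output, linear time-invariant systems (the source system and the target system), each written with coprime real polynomials and nonzero numerator. Assume both $G_S$ and $G_T$ are BIBO stable, and assume $G_S$ is minimum-phase. Then there exists a causal, BIBO stable rational transfer function $G_\alpha(z)$ achieving perfect transfer learning from the source to the target system, i.e. such that $G_\alpha(z)G_S(z)=G_T(z)$ (equivalently, for every bounded input $d$, feeding the source output $y_s$ into $G_\alpha$ yields exactly the target output $y_t$), if and only if the relative degree of $G_S$ is less than or equal to the relative degree of $G_T$.
   Context: For a rational transfer function $G(z)=N(z)/D(z)$ with coprime polynomials $N,D$, the relative degree is $\deg D-\deg N$. $G$ is causal if its relative degree is $\geq 0$. $G$ is BIBO stable if all roots of $D(z)$ lie in the open unit disk. $G$ is called minimum-phase if both $G$ and its inverse dynamics $1/G$ are BIBO stable, i.e. all roots of both $D(z)$ and $N(z)$ lie in the open unit disk. Perfect transfer learning means the transfer learning error $e=y_t-y_{TL}$ is identically zero for every bounded input, where $y_{TL}$ is the output of the map driven by $y_s$. *)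

From HB Require Import structures.
From mathcomp Require Import all_boot all_order all_algebra.
From mathcomp Require Import reals.
From mathcomp.real_closed Require Import complex.
Set Implicit Arguments. Unset Strict Implicit. Unset Printing Implicit Defensive.
Import Order.TTheory GRing.Theory Num.Theory.
Local Open Scope ring_scope.

Record tf (R : realType) := TF { tf_num : {poly R}; tf_den : {poly R} }.

Definition coprime_tf (R : realType) (G : tf R) : Prop :=
  tf_den G != 0 /\ coprimep (tf_num G) (tf_den G).

(* relative degree deg D - deg N (as an integer; size = degree + 1). *)
Definition reldeg (R : realType) (G : tf R) : int :=
  (size (tf_den G))%:Z - (size (tf_num G))%:Z.

Definition causal (R : realType) (G : tf R) : Prop := (0 <= reldeg G).

Definition roots_in_unit_disk (R : realType) (p : {poly R}) : Prop :=
  forall z : R[i], root (map_poly (real_complex R) p) z -> `|z| < 1.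

Definition bibo_stable (R : realType) (G : tf R) : Prop :=
  roots_in_unit_disk (tf_den G).

Definition minimum_phase (R : realType) (G : tf R) : Prop :=
  roots_in_unit_disk (tf_den G) /\ roots_in_unit_disk (tf_num G).

(* Ga * Gs = Gt as rational functions (cross-multiplied, all denominators nonzero) *)
Definition tf_mul_eq (R : realType) (Ga Gs Gt : tf R) : Prop :=
  tf_num Ga * tf_num Gs * tf_den Gt = tf_num Gt * (tf_den Ga * tf_den Gs).

(* A causal stable G_a with G_a G_S = G_T can only be G_T / G_S, and relative
   degrees add under products, so causality of G_a is exactly
   reldeg G_S <= reldeg G_T.  Conversely, reducing (N_T D_S) / (D_T N_S) by
   its gcd gives a coprime representation of G_T / G_S whose denominator
   divides D_T N_S; its poles are therefore poles of G_T or zeros of G_S, all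
   in the open unit disk since G_T is stable and G_S is minimum-phase. *)
From HB Require Import structures.
From mathcomp Require Import all_boot all_order all_algebra.
From mathcomp Require Import reals.
From mathcomp.real_closed Require Import complex.
From mathcomp Require Import zify ring.
Set Implicit Arguments. Unset Strict Implicit. Unset Printing Implicit Defensive.
Import Order.TTheory GRing.Theory Num.Theory.
Local Open Scope ring_scope.

Lemma size_mulz (R : idomainType) (p q : {poly R}) :
  p != 0 -> q != 0 -> (size (p * q))%:Z = (size p)%:Z + (size q)%:Z - 1.
Proof.
move=> p0 q0; rewrite size_mul //.
have := size_poly_gt0 p; rewrite p0; lia.
Qed.

Lemma reldeg_tf_mul_eq (R : realType) (Ga Gs Gt : tf R) :
  tf_den Ga != 0 -> tf_num Gs != 0 -> tf_den Gs != 0 ->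
  tf_num Gt != 0 -> tf_den Gt != 0 ->
  tf_mul_eq Ga Gs Gt -> reldeg Gt = reldeg Ga + reldeg Gs.
Proof.
case: Ga Gs Gt => [Na Da] [Ns Ds] [Nt Dt]; rewrite /tf_mul_eq /reldeg /=.
move=> Da0 Ns0 Ds0 Nt0 Dt0 E.
have Na0 : Na != 0.
  have : Nt * (Da * Ds) != 0 by rewrite !mulf_neq0.
  by rewrite -E !mulf_eq0 => /norP[/norP[]].
move/(congr1 (fun p : {poly R} => (size p)%:Z)): E.
rewrite !size_mulz ?mulf_neq0 //.
(* the sizes come out under different canonical instances of R, which lia
   would take for distinct atoms *)
move: (size Na) (size Da) (size Ns) (size Ds) (size Nt) (size Dt); lia.
Qed.

Lemma roots_in_unit_diskM (R : realType) (p q : {poly R}) :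
  roots_in_unit_disk p -> roots_in_unit_disk q -> roots_in_unit_disk (p * q).
Proof.
by move=> Hp Hq z; rewrite rmorphM rootM => /orP[/Hp | /Hq].
Qed.

Lemma roots_in_unit_disk_dvdp (R : realType) (p q : {poly R}) :
  p %| q -> roots_in_unit_disk q -> roots_in_unit_disk p.
Proof.
move=> pq Hq z pz; apply: Hq; apply: root_dvdp pz.
by rewrite dvdp_map.
Qed.

Definition tf_reduce (R : realType) (p q : {poly R}) : tf R :=
  TF (p %/ gcdp p q) (q %/ gcdp p q).

Lemma divp_dvd_neq0 (R : fieldType) (d p : {poly R}) :
  p != 0 -> d %| p -> p %/ d != 0.
Proof.
by move=> p0 /divpK dK; apply: contraNneq p0 => pd0; rewrite -dK pd0 mul0r.
Qed.

Lemma coprime_tf_reduce (R : realType) (p q : {poly R}) :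
  q != 0 -> coprime_tf (tf_reduce p q).
Proof.
move=> q0; split => /=; first by rewrite divp_dvd_neq0 ?dvdp_gcdr.
by apply: coprimep_div_gcd; rewrite q0 orbT.
Qed.

Lemma divp_gcd_cross (R : fieldType) (p q : {poly R}) :
  p %/ gcdp p q * q = p * (q %/ gcdp p q).
Proof. by rewrite mulrC divp_mulCA ?dvdp_gcdl ?dvdp_gcdr. Qed.

Theorem theorem2 (R : realType) (Gs Gt : tf R) :
  coprime_tf Gs -> tf_num Gs != 0 ->
  coprime_tf Gt -> tf_num Gt != 0 ->
  bibo_stable Gs -> bibo_stable Gt -> minimum_phase Gs ->
  (exists Ga : tf R,
      coprime_tf Ga /\ causal Ga /\ bibo_stable Ga /\ tf_mul_eq Ga Gs Gt)
  <-> (reldeg Gs <= reldeg Gt).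
Proof.
move=> [Ds0 _] Ns0 [Dt0 _] Nt0 _ stable_t [_ stable_Ns].
split=> [[Ga [[Da0 _] [causal_a [_ E]]]] | le_st].
  by rewrite (reldeg_tf_mul_eq Da0 Ns0 Ds0 Nt0 Dt0 E) lerDr.
set q := tf_den Gt * tf_num Gs.
set Ga := tf_reduce (tf_num Gt * tf_den Gs) q.
have q0 : q != 0 by rewrite mulf_neq0.
have [Da0 _] := coprime_tf_reduce (tf_num Gt * tf_den Gs) q0.
have E : tf_mul_eq Ga Gs Gt.
  rewrite /tf_mul_eq /= -mulrA [_ * tf_den Gt]mulrC divp_gcd_cross /=.
  ring.
exists Ga; split; first exact: coprime_tf_reduce.
split; first by rewrite /causal -(lerD2r (reldeg Gs)) add0r
  -(reldeg_tf_mul_eq Da0 Ns0 Ds0 Nt0 Dt0 E).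
split=> //; rewrite /bibo_stable /=.
apply: roots_in_unit_disk_dvdp (divp_dvd (dvdp_gcdr _ q)) _.
exact: roots_in_unit_diskM.
Qed.
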